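(* Let $w\in\mathbb{Q}^{V_+}_{\ge0}$, $b\in\mathbb{Z}^{V_+}_{\ge0}$, $\xi\in[N]$, and let $S=\{v_1,\dots,v_\ell\}\subseteq V_+$ be nonempty with $w_{v_1}\le\dots\le w_{v_\ell}$. Let $k'\in\mathbb{Z}_{>0}$ satisfy $k_\xi(S)-k'\le b(S)$, and let $j\in[\ell]$ be the smallest index with $k_\xi(S)-k'\le\sum_{i\in[j]}b_{v_i}$. Set $\bar\alpha_S=\mathbb{I}(k_\xi(S)>k')\,w_{v_j}$ and $\bar\beta_v=\mathbb{I}(v\in\{v_1,\dots,v_{j-1}\})(w_v-w_{v_j})$ for all $v\in V_+$. Then $(\bar\alpha_S,\bar\beta)$ is an optimal solution of the dual linear program $$\max\Big\{\alpha_S(k_\xi(S)-k')+\sum_{v\in V_+}\beta_vb_v:\ \alpha_S+\beta_v\le w_v\ (v\in S),\ \beta_v\le w_v\ (v\in V_+\setminus S),\ \alpha_S\ge0,\ \beta\le0\Big\}$$ of $\mathcal{L}^*_\xi(S,k')=\min\{\sum_{v\in V_+}w_vy_v:\ y(S)\ge k_\xi(S)-k',\ y_v\le b_v\ \forall v\in V_+,\ y\ge0\}$, and $\bar\alpha_S\le\mathcal{L}^*_\xi(S,k')$.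
   Context: $V_+$ is a finite set of customers; $C>0$ is the capacity; $d^\xi\in\mathbb{Q}^{V_+}_{\ge0}$ is the demand vector of scenario $\xi$; $f(S)=\sum_{i\in S}f(i)$; $k_\xi(S)=\lceil d^\xi(S)/C\rceil$; $[j]=\{1,\dots,j\}$ (empty if $j\le 0$); $\mathbb{I}$ is the indicator function. *)

From mathcomp Require Import all_boot all_order all_algebra.
Set Implicit Arguments. Unset Strict Implicit. Unset Printing Implicit Defensive.
Import Order.TTheory GRing.Theory Num.Theory.
Local Open Scope ring_scope.

Definition kxi (V : finType) (C : rat) (dxi : V -> rat) (S : {set V}) : int :=
  Num.ceil ((\sum_(i in S) dxi i) / C).

Definition primal_feasible (V : finType) (b : V -> nat) (S : {set V}) (rhs : int)
  (y : V -> rat) : Prop :=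
  [/\ rhs%:~R <= \sum_(v in S) y v,
      forall v, y v <= (b v)%:R
    & forall v, 0 <= y v].

Definition primal_obj (V : finType) (w y : V -> rat) : rat := \sum_v w v * y v.

Definition dual_feasible (V : finType) (w : V -> rat) (S : {set V})
  (alpha : rat) (beta : V -> rat) : Prop :=
  [/\ forall v, v \in S -> alpha + beta v <= w v,
      forall v, v \notin S -> beta v <= w v,
      0 <= alpha
    & forall v, beta v <= 0].

Definition dual_obj (V : finType) (b : V -> nat) (rhs : int)
  (alpha : rat) (beta : V -> rat) : rat :=
  alpha * rhs%:~R + \sum_v beta v * (b v)%:R.

(* Let r = k_xi(S) - k'.  The greedy solution y, which fills v_1, ..., v_(j-1)
   to capacity and puts the remaining demand r - b(v_1) - ... - b(v_(j-1)) on
   the pivot v_j, is primal feasible and costs exactly the dual objective of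
   (alpha_bar, beta_bar) (complementary slackness), so weak duality makes
   (alpha_bar, beta_bar) dual optimal.  When r > 0, minimality of j and
   integrality give a remaining demand of at least 1 on v_j, whence
   alpha_bar = w(v_j) is at most the cost of y, i.e. at most the primal
   optimum.  When r <= 0, minimality forces j = 1, so beta_bar = 0 and y = 0
   is the certificate. *)

From mathcomp Require Import all_boot all_order all_algebra.
From mathcomp Require Import ring.
Set Implicit Arguments. Unset Strict Implicit. Unset Printing Implicit Defensive.
Import Order.TTheory GRing.Theory Num.Theory.
Local Open Scope ring_scope.

Lemma dual_obj_le_primal_obj (V : finType) (w : V -> rat) (b : V -> nat)
    (S : {set V}) (r : int) alpha beta y :
  dual_feasible w S alpha beta -> primal_feasible b S r y ->
  dual_obj b r alpha beta <= primal_obj w y.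
Proof.
case=> wS wSC alpha_ge0 beta_le0 [r_le y_le_b y_ge0].
apply: (@le_trans _ _ (alpha * \sum_(x in S) y x + \sum_x beta x * y x)).
  apply: lerD; first exact: ler_wpM2l.
  by apply: ler_sum => x _; apply: ler_wnM2l.
rewrite /primal_obj mulr_sumr [\sum_x beta x * y x](bigID (mem S)) /=.
rewrite addrA -big_split /= [X in _ <= X](bigID (mem S)) /=.
apply: lerD; apply: ler_sum => x Sx.
  by rewrite -mulrDl; apply: ler_wpM2r; [|exact: wS].
by apply: ler_wpM2r; [|exact: wSC].
Qed.

Lemma primal_feasible0 (V : finType) (b : V -> nat) (S : {set V}) (r : int) :
  r <= 0 -> primal_feasible b S r (fun=> 0).
Proof.
by move=> r_le0; split=> [|x|x]; rewrite ?big1_eq ?lerz0 ?ler0n.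
Qed.

Lemma primal_obj0 (V : finType) (w : V -> rat) : primal_obj w (fun=> 0) = 0.
Proof. by rewrite /primal_obj big1 // => x _; rewrite mulr0. Qed.

Section PrefixSums.
Variables (l : nat) (j : 'I_l).

Lemma sum_ord_le_pivot (R : nmodType) (F : 'I_l -> R) :
  \sum_(i < l | (i <= j)%N) F i = F j + \sum_(i < l | (i < j)%N) F i.
Proof.
rewrite (bigD1 j) //=; congr (_ + _); apply: eq_bigl => i.
by rewrite ltn_neqAle -val_eqE /= andbC.
Qed.

Lemma sum_ord_lt_eq_pivot (R : nmodType) (F : 'I_l -> R) (c : R) :
  \sum_(i < l) (if (i < j)%N then F i else if i == j then c else 0) =
  \sum_(i < l | (i < j)%N) F i + c.
Proof.
rewrite (bigD1 j) //= ltnn eqxx addrC; congr (_ + _).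
rewrite big_mkcond [RHS]big_mkcond; apply: eq_bigr => i _.
by case: eqP => [->|_]; rewrite ?ltnn //; case: ifP.
Qed.

Variables (F : 'I_l -> int) (r : int).
Hypothesis minimal : forall j0 : 'I_l, (j0 < j)%N ->
  ~ r <= \sum_(i < l | (i <= j0)%N) F i.

Lemma minimal_prefix_lt : 0 < r -> \sum_(i < l | (i < j)%N) F i < r.
Proof.
move=> r_gt0; case: (posnP j) => [j0 | j_gt0].
  by rewrite big_pred0 // => i; rewrite j0.
have jpred_lt : (j.-1 < l)%N by rewrite (leq_ltn_trans (leq_pred j)).
have := @minimal (Ordinal jpred_lt); rewrite /= prednK // => /(_ (leqnn _)).
have -> : \sum_(i < l | (i <= j.-1)%N) F i = \sum_(i < l | (i < j)%N) F i.
  by apply: eq_bigl => i; rewrite -ltnS prednK.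
by move/negP; rewrite -ltNge.
Qed.

Lemma minimal_prefix_index0 :
  (forall i, 0 <= F i) -> r <= 0 -> j = 0%N :> nat.
Proof.
move=> F_ge0 r_le0; apply/eqP; rewrite -leqn0 leqNgt; apply/negP => j_gt0.
apply: (@minimal (Ordinal (ltn_trans j_gt0 (ltn_ord j))) j_gt0).
by apply: le_trans r_le0 _; apply: sumr_ge0.
Qed.
End PrefixSums.

Section GreedySolutions.
Variables (V : finType) (w : V -> rat) (b : V -> nat).
Variables (l : nat) (v : 'I_l -> V) (j : 'I_l).
Hypotheses (w_ge0 : forall x, 0 <= w x) (v_inj : injective v).
Hypothesis w_mono : forall i i' : 'I_l, (i <= i')%N -> w (v i) <= w (v i').

Local Notation S := [set v i | i : 'I_l].

Definition prefix_set : {set V} := [set v i | i : 'I_l & (i < j)%N].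

Definition prefix_mass : rat := \sum_(i < l | (i < j)%N) (b (v i))%:R.

Definition greedy_dual_beta (x : V) : rat :=
  if x \in prefix_set then w x - w (v j) else 0.

Definition greedy_primal (r : int) (x : V) : rat :=
  if x \in prefix_set then (b x)%:R
  else if x == v j then r%:~R - prefix_mass else 0.

Lemma mem_prefix_set i : (v i \in prefix_set) = (i < j)%N.
Proof. by rewrite mem_imset // inE. Qed.

Lemma prefix_setP x :
  reflect (exists2 i : 'I_l, (i < j)%N & x = v i) (x \in prefix_set).
Proof.
by apply: (iffP imsetP) => -[i ij ->]; exists i; rewrite ?inE in ij *.
Qed.

Lemma prefix_set_sub : prefix_set \subset S.
Proof. by apply/subsetP => _ /prefix_setP[i _ ->]; rewrite imset_f. Qed.

Lemma sum_supported_image (F : V -> rat) :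
  (forall x, x \notin S -> F x = 0) -> \sum_x F x = \sum_i F (v i).
Proof.
move=> F0; rewrite (bigID (mem S)) /= [X in _ + X]big1 ?addr0 //.
by rewrite big_imset //; apply: in2W.
Qed.

Lemma notin_prefix_set {x} : x \notin S -> x \notin prefix_set.
Proof. exact: contra (subsetP prefix_set_sub x). Qed.

Lemma greedy_dual_feasible (alpha : rat) :
  0 <= alpha <= w (v j) -> dual_feasible w S alpha greedy_dual_beta.
Proof.
case/andP=> alpha_ge0 alpha_le; rewrite /greedy_dual_beta.
split=> [_ /imsetP[i _ ->]|x xNS||x].
- rewrite mem_prefix_set; case: ltnP => [_|ji]; first by rewrite addrCA gerDl subr_le0.
  by rewrite addr0 (le_trans alpha_le) ?w_mono.
- by rewrite (negbTE (notin_prefix_set xNS)) w_ge0.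
- exact: alpha_ge0.
- case: prefix_setP => [[i ij ->] | _]; last exact: lexx.
  by rewrite subr_le0 w_mono // ltnW.
Qed.

Lemma greedy_dual_obj (r : int) (alpha : rat) :
  dual_obj b r alpha greedy_dual_beta =
  alpha * r%:~R + \sum_(i < l | (i < j)%N) (w (v i) - w (v j)) * (b (v i))%:R.
Proof.
rewrite /dual_obj sum_supported_image.
  congr (_ + _); rewrite [RHS]big_mkcond; apply: eq_bigr => i _.
  by rewrite /greedy_dual_beta mem_prefix_set; case: ifP; rewrite ?mul0r.
move=> x xNS; rewrite /greedy_dual_beta.
by rewrite (negbTE (notin_prefix_set xNS)) mul0r.
Qed.

Lemma greedy_primal_image (r : int) i :
  greedy_primal r (v i) =
  if (i < j)%N then (b (v i))%:R else if i == j then r%:~R - prefix_mass else 0.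
Proof. by rewrite /greedy_primal mem_prefix_set (inj_eq v_inj). Qed.

Lemma greedy_primal_notin (r : int) x : x \notin S -> greedy_primal r x = 0.
Proof.
move=> xNS; rewrite /greedy_primal (negbTE (notin_prefix_set xNS)).
by case: eqP => [xj | _]; first by rewrite xj imset_f in xNS.
Qed.

Lemma greedy_primal_feasible (r : int) :
  prefix_mass <= r%:~R <= prefix_mass + (b (v j))%:R ->
  primal_feasible b S r (greedy_primal r).
Proof.
case/andP=> mass_le r_le; split=> [|x|x].
- rewrite big_imset /=; last exact: in2W.
  under eq_bigr do rewrite greedy_primal_image.
  by rewrite sum_ord_lt_eq_pivot /prefix_mass addrC subrK.
- rewrite /greedy_primal; case: ifP => _; first exact: lexx.
  by case: eqP => [-> | _]; rewrite ?ler0n // lerBlDl.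
- rewrite /greedy_primal; case: ifP => _; first exact: ler0n.
  by case: eqP => _; rewrite ?subr_ge0 // lexx.
Qed.

Lemma greedy_primal_obj (r : int) :
  primal_obj w (greedy_primal r) =
  \sum_(i < l | (i < j)%N) w (v i) * (b (v i))%:R + w (v j) * (r%:~R - prefix_mass).
Proof.
rewrite /primal_obj sum_supported_image; last first.
  by move=> x /greedy_primal_notin ->; rewrite mulr0.
rewrite -sum_ord_lt_eq_pivot; apply: eq_bigr => i _; rewrite greedy_primal_image.
by case: ltnP => _ //; case: eqP => [-> | _]; rewrite ?mulr0.
Qed.

Lemma greedy_objectives_eq (r : int) :
  primal_obj w (greedy_primal r) = dual_obj b r (w (v j)) greedy_dual_beta.
Proof.
rewrite greedy_primal_obj greedy_dual_obj /prefix_mass.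
under [in RHS]eq_bigr do rewrite mulrBl.
rewrite sumrB -mulr_sumr; ring.
Qed.

Lemma pivot_weight_le_greedy_obj (r : int) :
  prefix_mass + 1 <= r%:~R -> w (v j) <= primal_obj w (greedy_primal r).
Proof.
move=> mass_lt; rewrite greedy_primal_obj ler_wpDl //.
- by apply: sumr_ge0 => i _; rewrite mulr_ge0 ?ler0n.
- by rewrite ler_peMr ?w_ge0 // lerBrDl.
Qed.

End GreedySolutions.

Lemma intr_sum_natr (I : finType) (P : pred I) (F : I -> nat) :
  (\sum_(i | P i) (F i)%:R : int)%:~R = \sum_(i | P i) (F i)%:R :> rat.
Proof. by rewrite rmorph_sum; apply: eq_bigr => i _; rewrite rmorph_nat. Qed.

Theorem lemma6 (V : finType) (C : rat) (N : nat) (d : 'I_N -> V -> rat)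
  (w : V -> rat) (b : V -> nat) (xi : 'I_N)
  (S : {set V}) (l : nat) (v : 'I_l -> V) (k' : int) (j : 'I_l) :
  0 < C ->
  (forall n x, 0 <= d n x) ->
  (forall x, 0 <= w x) ->
  S != set0 ->
  injective v ->
  S = [set v i | i : 'I_l] ->
  (forall i i' : 'I_l, (i <= i')%N -> w (v i) <= w (v i')) ->
  0 < k' ->
  kxi C (d xi) S - k' <= (\sum_(x in S) (b x)%:R : int) ->
  kxi C (d xi) S - k' <= (\sum_(i < l | (i <= j)%N) (b (v i))%:R : int) ->
  (forall j0 : 'I_l, (j0 < j)%N ->
     ~ (kxi C (d xi) S - k' <= (\sum_(i < l | (i <= j0)%N) (b (v i))%:R : int))) ->
  let rhs := kxi C (d xi) S - k' in
  let alpha_bar : rat := if k' < kxi C (d xi) S then w (v j) else 0 in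
  let beta_bar : V -> rat := fun x =>
    if x \in [set v i | i : 'I_l & (i < j)%N] then w x - w (v j) else 0 in
  [/\ dual_feasible w S alpha_bar beta_bar,
      (forall alpha beta, dual_feasible w S alpha beta ->
         dual_obj b rhs alpha beta <= dual_obj b rhs alpha_bar beta_bar)
    & (forall y, primal_feasible b S rhs y -> alpha_bar <= primal_obj w y)].
Proof.
move=> _ _ w_ge0 _ v_inj S_def w_mono _ _ r_le_prefix minimal r a beta.
subst S; move: r_le_prefix minimal; rewrite -/r => r_le_prefix minimal.
have [y [y_feas obj_eq a_le]] : exists y, [/\ primal_feasible b [set v i | i : 'I_l] r y,
    primal_obj w y = dual_obj b r a beta & a <= dual_obj b r a beta].
  rewrite {}/a; case: ltP => [k'_lt | kxi_le].
  - have r_gt0 : 0 < r by rewrite subr_gt0.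
    have := minimal_prefix_lt minimal r_gt0; rewrite -lezD1 -(ler_int rat) intrD.
    rewrite intr_sum_natr => mass_lt.
    move: r_le_prefix; rewrite sum_ord_le_pivot -(ler_int rat) [X in _ <= X]intrD intr_sum_natr.
    rewrite rmorph_nat addrC => r_le.
    exists (greedy_primal b v j r); split.
    + by apply: greedy_primal_feasible => //; rewrite r_le (le_trans _ mass_lt) ?lerDl.
    + exact: greedy_objectives_eq.
    + by rewrite -greedy_objectives_eq //; apply: pivot_weight_le_greedy_obj.
  - have r_le0 : r <= 0 by rewrite subr_le0.
    have j0 := minimal_prefix_index0 minimal (fun i => ler0n _ _) r_le0.
    exists (fun=> 0); rewrite greedy_dual_obj // mul0r add0r big_pred0 => [|i]; last by rewrite j0.
    by split; [apply: primal_feasible0 | apply: primal_obj0 | apply: lexx].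
have feas : dual_feasible w [set v i | i : 'I_l] a beta.
  by apply: greedy_dual_feasible => //; rewrite /a; case: ifP => _; rewrite ?lexx ?w_ge0.
split=> // [al be /dual_obj_le_primal_obj/(_ y_feas) | y'].
  by rewrite obj_eq.
by move/(dual_obj_le_primal_obj feas); apply: le_trans a_le.
Qed.
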